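(* Let $k\geq 2$, $n,m,p,z$ be nonnegative integers, and let $R\in\mathcal R^n_{m,p,z}\cap\mathcal M$. Let $w$ be chosen uniformly at random from $[k]^n$, and let $B_R$ be the event that $w$ contains a regular pair of twins $(w_1,w_2)$ with $R(w_1,w_2,w)=R$. Then \[ \Pr[B_R]=(1/k)^m(1-1/k)^{p+n-2m-z}. \]
   Context: $[k]=\{1,\dots,k\}$; $w[i]$ is the $i$-th letter of $w$. Two subsequences of $w$ are twins if they are equal as words and use disjoint sets of positions of $w$. Twins $(w_1,w_2)$ are monotone if for every $i$ the $i$-th letter of $w_1$ occurs in $w$ before the $i$-th letter of $w_2$. For monotone twins, $R(w_1,w_2,w)\in\{0,1,2\}^n$ is given by $R[i]=0$ if position $i$ is in neither twin, $1$ if it is in $w_1$, $2$ if it is in $w_2$. Monotone twins are regular if (a) there are no $i<j$ with $R[i]=2$, $R[j]=1$, $R[k']=0$ for all $i<k'<j$, and $w[i]=w[j]$; and (b) there are no $i<j$ with $R[i]\in\{1,2\}$, $R[j]=0$, $R[k']=0$ for all $i<k'<j$, and $w[i]=w[j]$. $\mathcal R^n_m$ is the set of words in $\{0,1,2\}^n$ in which the letters $1$ and $2$ each occur exactly $m$ times. For $R\in\{0,1,2\}^n$, $p(R)$ is the number of occurrences of the pattern consisting of a $2$, followed by zero or more $0$'s, followed by a $1$ (as consecutive letters), and $z(R)$ is the length of the longest prefix of $R$ consisting only of $0$'s. $\mathcal R^n_{m,p,z}=\{R\in\mathcal R^n_m: p(R)=p,\ z(R)=z\}$. $\mathcal M$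 is the set of words in $\{0,1,2\}^n$ in which every prefix contains at least as many $1$'s as $2$'s. *)

From HB Require Import structures.
From mathcomp Require Import all_boot all_order all_algebra.
Set Implicit Arguments. Unset Strict Implicit. Unset Printing Implicit Defensive.

(* Words R in {0,1,2}^n are sequences of naturals (letters 0,1,2);
   words w in [k]^n are n-tuples over 'I_k (letter a+1 of [k] <-> a : 'I_k). *)

Definition between0 (R : seq nat) (i j : nat) : bool :=
  all (fun t => nth 0 R t == 0) (iota i.+1 (j - i.+1)).

Definition pat21 (R : seq nat) (i j : nat) : bool :=
  [&& i < j, j < size R, nth 0 R i == 2, nth 0 R j == 1 & between0 R i j].

Definition p_of (R : seq nat) : nat :=
  \sum_(i < size R) \sum_(j < size R) pat21 R i j.

Definition z_of (R : seq nat) : nat :=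
  \max_(l < (size R).+1 | all (fun x => x == 0) (take l R)) l.

Definition in_Rnm (n m : nat) (R : seq nat) : bool :=
  [&& size R == n, all (fun x => x < 3) R,
      count_mem 1 R == m & count_mem 2 R == m].

Definition in_M (R : seq nat) : Prop :=
  forall l, count_mem 2 (take l R) <= count_mem 1 (take l R).

Section Twins.
Variables (k n : nat).
Implicit Types (w : n.-tuple 'I_k) (S : {set 'I_n}).

Definition subword w S : seq 'I_k := [seq tnth w i | i <- enum S].

Definition positions S : seq nat := [seq val i | i <- enum S].

Definition twins w S1 S2 : bool :=
  [disjoint S1 & S2] && (subword w S1 == subword w S2).

Definition monotone S1 S2 : bool :=
  [forall t : 'I_n, (t < #|S1|) ==> (nth 0 (positions S1) t < nth 0 (positions S2) t)].

Definition R_of S1 S2 : seq nat :=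
  [seq (if i \in S1 then 1 else if i \in S2 then 2 else 0) | i <- enum 'I_n].

Definition regular w S1 S2 : bool :=
  let R := R_of S1 S2 in
  [forall i : 'I_n, forall j : 'I_n,
     ~~ [&& i < j, nth 0 R i == 2, nth 0 R j == 1, between0 R i j
          & tnth w i == tnth w j]] &&
  [forall i : 'I_n, forall j : 'I_n,
     ~~ [&& i < j, nth 0 R i \in [:: 1; 2], nth 0 R j == 0, between0 R i j
          & tnth w i == tnth w j]].

Definition B_event (R : seq nat) w : bool :=
  [exists S1 : {set 'I_n}, exists S2 : {set 'I_n},
     [&& twins w S1 S2, monotone S1 S2, regular w S1 S2 & R_of S1 S2 == R]].

End Twins.

Definition prob_B (k n : nat) (R : seq nat) : rat :=
  (#|[set w : n.-tuple 'I_k | B_event R w]|)%:R / (k ^ n)%:R.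

From HB Require Import structures.
From mathcomp Require Import all_boot all_order all_algebra.
From mathcomp Require Import zify ring.
Import GRing.Theory Num.Theory.

(* Twins (w1, w2) with R(w1, w2, w) = R must occupy exactly the positions of the 1's and of
   the 2's of R, and since R lies in M they are automatically monotone. So B_R only says that
   w is good letter by letter. Reading w from left to right: the letter at the j-th 2 of R
   must repeat the letter at the j-th 1 (one choice); the letter at a 1 ending a factor
   2 0^* 1 must differ from the letter at that 2 (k - 1 choices, p such positions); the
   letter at a 0 must differ from the letter at the last nonzero position before it, if any
   (k - 1 choices, n - 2m - z such positions); every other letter is free. Hence B_R has
   k^(m - p + z) (k - 1)^(p + n - 2m - z) elements. *)

(** * Zero runs and the last nonzero letter *)

Lemma between0P R i j :
  reflect (forall t, i < t < j -> nth 0 R t = 0) (between0 R i j).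
Proof.
have mem_range t : (t \in iota i.+1 (j - i.+1)) = (i < t < j).
  by rewrite mem_iota; apply/idP/idP => /andP[]; lia.
apply: (iffP allP) => H t; first by rewrite -mem_range => /H /eqP.
by rewrite mem_range => /H ->.
Qed.

Lemma between0_rcons R r i j :
  j <= size R -> between0 (rcons R r) i j = between0 R i j.
Proof.
move=> le_jR; apply/between0P/between0P => H t /andP[lt_it lt_tj];
  have lt_tR := leq_trans lt_tj le_jR.
  by have := H t; rewrite nth_rcons lt_tR lt_it; apply.
by rewrite nth_rcons lt_tR H ?lt_it.
Qed.

Lemma mem_iota0 n i : (i \in iota 0 n) = (i < n).
Proof. by rewrite mem_iota. Qed.

Lemma between0_rcons_last R r i : i < size R ->
  between0 (rcons R r) i (size R).+1 = between0 R i (size R) && (r == 0).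
Proof.
move=> lt_iR; apply/between0P/andP => [H | [/between0P H /eqP r0] t].
  split; last by have := H (size R); rewrite nth_rcons ltnn eqxx lt_iR ltnSn => /(_ isT) ->.
  apply/between0P => t /andP[lt_it lt_tR].
  by have := H t; rewrite nth_rcons lt_tR lt_it ltnW //; apply.
move=> /andP[lt_it]; rewrite ltnS leq_eqVlt nth_rcons => /orP[/eqP-> | lt_tR].
  by rewrite ltnn eqxx.
by rewrite lt_tR H ?lt_it.
Qed.

Lemma between0_succ R i : between0 R i i.+1.
Proof. by rewrite /between0 subnn. Qed.

Lemma sum_ord_eq k x : x < k -> \sum_(a < k) (nat_of_ord a == x) = 1.
Proof.
move=> lt_xk; rewrite (bigD1 (Ordinal lt_xk)) //= eqxx big1 // => a.
by rewrite -val_eqE => /negbTE ->.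
Qed.

Lemma sum_ord_neq k x : x < k -> \sum_(a < k) (nat_of_ord a != x) = k.-1.
Proof.
move=> lt_xk; rewrite -[k in RHS]card_ord -(cardC1 (Ordinal lt_xk)) -sum1_card.
by rewrite [RHS]big_mkcond; apply: eq_bigr => a _; rewrite inE -val_eqE; case: eqP.
Qed.

Lemma sum_bool_count n (a : pred nat) : \sum_(i < n) a i = count a (iota 0 n).
Proof.
by rewrite -sum1_count [RHS]big_mkcond -(big_mkord xpredT (fun i => a i : nat)) /index_iota subn0.
Qed.

Section LastNonzero.
Variable P : pred nat.

Definition last_nonzero_at (R : seq nat) (i : nat) : bool :=
  P (nth 0 R i) && between0 R i (size R).

Definition last_nonzero_in (R : seq nat) : bool :=
  has (last_nonzero_at R) (iota 0 (size R)).

Definition differs_from_last (R W : seq nat) (a : nat) : bool :=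
  all (fun i => last_nonzero_at R i ==> (nth 0 W i != a)) (iota 0 (size R)).

Hypothesis P0 : P 0 = false.

Lemma last_nonzero_at_inj R i j : i < size R -> j < size R ->
  last_nonzero_at R i -> last_nonzero_at R j -> i = j.
Proof.
move=> lt_iR lt_jR /andP[Pi /between0P Bi] /andP[Pj /between0P Bj].
case: (ltngtP i j) => // [lt_ij | lt_ji].
  by move: Pj; rewrite Bi ?lt_ij ?lt_jR ?P0.
by move: Pi; rewrite Bj ?lt_ji ?lt_iR ?P0.
Qed.

Lemma count_last_nonzero_at R :
  count (last_nonzero_at R) (iota 0 (size R)) = last_nonzero_in R.
Proof.
case: (boolP (last_nonzero_in R)) => [/hasP[i0 Ii0 Li0] | /hasPn none]; last first.
  by rewrite (@eq_in_count _ _ pred0) ?count_pred0 // => i /none /negbTE.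
rewrite (@eq_in_count _ _ (pred1 i0)) ?count_uniq_mem ?iota_uniq ?Ii0 //.
move=> i Ii /=; apply/idP/eqP => [Li | -> //].
move: Ii Ii0; rewrite !mem_iota0 => lt_iR lt_i0R.
exact: last_nonzero_at_inj _ _ _ lt_iR lt_i0R Li Li0.
Qed.

Lemma last_nonzero_at_rcons R r i : i < size R ->
  last_nonzero_at (rcons R r) i = last_nonzero_at R i && (r == 0).
Proof.
by move=> lt_iR; rewrite /last_nonzero_at size_rcons between0_rcons_last // nth_rcons lt_iR andbA.
Qed.

Lemma last_nonzero_in_rcons R r :
  last_nonzero_in (rcons R r) = (r == 0) && last_nonzero_in R || P r.
Proof.
rewrite /last_nonzero_in size_rcons -addn1 iotaD has_cat /= orbF add0n.
have -> : last_nonzero_at (rcons R r) (size R) = P r.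
  by rewrite /last_nonzero_at size_rcons nth_rcons ltnn eqxx between0_succ andbT.
congr orb; case: (r =P 0) => [-> | /eqP/negbTE nz_r] /=.
  apply: eq_in_has => i; rewrite mem_iota0 => lt_iR.
  by rewrite last_nonzero_at_rcons // andbT.
apply/hasPn => i; rewrite mem_iota0 => lt_iR.
by rewrite last_nonzero_at_rcons // nz_r andbF.
Qed.

Lemma differs_from_lastE R W a i0 : i0 < size R -> last_nonzero_at R i0 ->
  differs_from_last R W a = (nth 0 W i0 != a).
Proof.
move=> lt_i0R Li0; apply/allP/idP => [/(_ i0) | neq i].
  by rewrite mem_iota0 lt_i0R Li0 => /(_ isT).
rewrite mem_iota0 => lt_iR; apply/implyP => Li.
by rewrite (last_nonzero_at_inj _ _ _ lt_iR lt_i0R Li Li0).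
Qed.

Lemma differs_from_last_free R W a : ~~ last_nonzero_in R -> differs_from_last R W a.
Proof. by move=> /hasPn none; apply/allP => i /none /negbTE ->. Qed.

Lemma sum_differs_from_last k R W : size W = size R -> all (fun x => x < k) W ->
  \sum_(a < k) differs_from_last R W a = if last_nonzero_in R then k.-1 else k.
Proof.
move=> eq_size /allP ltW; case: ifPn => [/hasP[i0] | none].
  rewrite mem_iota0 => lt_i0R Li0.
  under eq_bigr => a _ do rewrite (differs_from_lastE _ _ a _ lt_i0R Li0) eq_sym.
  by rewrite sum_ord_neq // ltW // mem_nth // eq_size.
under eq_bigr => a _ do rewrite differs_from_last_free //.
by rewrite sum_nat_const card_ord muln1.
Qed.

End LastNonzero.

Lemma last_nonzero_in_nonzero R : last_nonzero_in (predC1 0) R = has (predC1 0) R.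
Proof.
elim/last_ind: R => // R r IH.
by rewrite last_nonzero_in_rcons // IH has_rcons /=; case: (r == 0); rewrite /= ?orbF.
Qed.

(** * The statistics p and z *)

Lemma iota0S n : iota 0 n.+1 = rcons (iota 0 n) n.
Proof. by rewrite -addn1 iotaD cats1. Qed.

Lemma count_mem_rcons (c : nat) R r : count_mem c (rcons R r) = count_mem c R + (r == c).
Proof. by rewrite -cats1 count_cat /= addn0 eq_sym. Qed.

Lemma count_mem012 R : all (fun x => x < 3) R ->
  count_mem 0 R + count_mem 1 R + count_mem 2 R = size R.
Proof.
elim: R => //= x R IH /andP[lt_x3 /IH <-].
by case: x lt_x3 => [|[|[|]]] //= _; rewrite !add0n ?add1n ?addn0 ?addnS ?addSn.
Qed.

Lemma pat21_rcons R r i j : i < size R -> j < size R ->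
  pat21 (rcons R r) i j = pat21 R i j.
Proof.
move=> lt_iR lt_jR.
by rewrite /pat21 size_rcons ltnS !nth_rcons lt_iR lt_jR (ltnW lt_jR) between0_rcons // ltnW.
Qed.

Lemma pat21_rcons_last R r i : i < size R ->
  pat21 (rcons R r) i (size R) = (r == 1) && last_nonzero_at (pred1 2) R i.
Proof.
move=> lt_iR.
by rewrite /pat21 size_rcons ltnSn !nth_rcons lt_iR ltnn eqxx between0_rcons //= andbCA.
Qed.

Lemma p_of_rcons R r :
  p_of (rcons R r) = p_of R + ((r == 1) && last_nonzero_in (pred1 2) R).
Proof.
rewrite /p_of size_rcons big_ord_recr /= [X in _ + X]big1 ?addn0; last first.
  by move=> j _; rewrite /pat21 size_rcons ltnS; case: ltnP.
under eq_bigr => i _ do rewrite big_ord_recr /= (pat21_rcons_last _ r _ (ltn_ord i)).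
rewrite big_split /=; congr (_ + _).
  by apply: eq_bigr => i _; apply: eq_bigr => j _; rewrite pat21_rcons.
case: (r == 1) => /=; last by rewrite big1.
by rewrite sum_bool_count count_last_nonzero_at.
Qed.

Lemma z_ofE R : z_of R = find (predC1 0) R.
Proof.
have prefix0 l : l <= size R -> all (pred1 0) (take l R) = (l <= find (predC1 0) R).
  move=> le_lR; rewrite -(eq_all (a1 := predC (predC1 0))); last by move=> x /=; rewrite negbK.
  by rewrite all_predC has_take_leq // -leqNgt.
apply/eqP; rewrite eqn_leq; apply/andP; split.
  by apply/bigmax_leqP => l; rewrite prefix0 // -ltnS ltn_ord.
have lt_find : find (predC1 0) R < (size R).+1 by rewrite ltnS find_size.
by apply: (leq_trans _ (leq_bigmax_cond (Ordinal lt_find) _)); rewrite //= prefix0 // find_size.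
Qed.

Lemma z_of_rcons R r : z_of (rcons R r) = z_of R + ((r == 0) && ~~ has (predC1 0) R).
Proof.
rewrite !z_ofE -cats1 find_cat; case: (boolP (has _ R)) => [_ | none].
  by rewrite andbF addn0.
by rewrite andbT (hasNfind none) /=; case: r.
Qed.

Lemma p_of_z_of_le R : p_of R <= count_mem 1 R /\ z_of R <= count_mem 0 R.
Proof.
elim/last_ind: R => [|R r [p_le z_le]]; first by rewrite /p_of big_ord0 z_ofE.
rewrite p_of_rcons z_of_rcons !count_mem_rcons.
by split; apply: leq_add => //; case: (r == _); rewrite ?leq_b1.
Qed.

Lemma in_M_rcons R r :
  in_M (rcons R r) -> in_M R /\ count_mem 2 R + (r == 2) <= count_mem 1 R.
Proof.
move=> M_Rr; have M_R : in_M R.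
  move=> l; case: (leqP l (size R)) => [le_lR | /ltnW le_Rl].
    by have := M_Rr l; rewrite -cats1 takel_cat.
  by have := M_Rr (size R); rewrite -cats1 takel_cat // take_size take_oversize.
split=> //; have [r2 | _] := eqVneq r 2; last by have := M_R (size R); rewrite take_size addn0.
by have := M_Rr (size R).+1; rewrite take_oversize ?size_rcons // !count_mem_rcons r2 addn0.
Qed.

Definition regular_wrt (P Q : pred nat) (R W : seq nat) : bool :=
  all (fun i => all (fun j =>
    ~~ [&& i < j, P (nth 0 R i), Q (nth 0 R j), between0 R i j & nth 0 W i == nth 0 W j])
  (iota 0 (size R))) (iota 0 (size R)).

Definition letters_at (c : nat) (R W : seq nat) : seq nat :=
  [seq nth 0 W i | i <- iota 0 (size R) & nth 0 R i == c].

(* W is a prefix of a good word for a prefix R of the pattern: the 2's seen so far copy the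
   first 1's. This is the form of the condition that survives truncation. *)
Definition admissible (R W : seq nat) : bool :=
  [&& letters_at 2 R W == take (count_mem 2 R) (letters_at 1 R W),
      regular_wrt (pred1 2) (pred1 1) R W & regular_wrt (predC1 0) (pred1 0) R W].

Definition admissible_step (R W : seq nat) (r a : nat) : bool :=
  if r == 0 then differs_from_last (predC1 0) R W a
  else if r == 1 then differs_from_last (pred1 2) R W a
  else a == nth 0 (letters_at 1 R W) (count_mem 2 R).

Lemma size_letters_at c R W : size (letters_at c R W) = count_mem c R.
Proof.
by rewrite size_map size_filter -[in RHS](take_size R) -(map_nth_iota0 0) // count_map.
Qed.

Lemma letters_at_subset c R W : size W = size R -> {subset letters_at c R W <= W}.
Proof.
move=> eq_size x /mapP[i]; rewrite mem_filter mem_iota0 => /andP[_ lt_iR] ->.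
by rewrite mem_nth // eq_size.
Qed.

Lemma letters_at_rcons c R W r a : size W = size R ->
  letters_at c (rcons R r) (rcons W a)
  = letters_at c R W ++ (if r == c then [:: a] else [::]).
Proof.
move=> eq_size; rewrite /letters_at size_rcons iota0S filter_rcons nth_rcons ltnn eqxx.
rewrite (eq_in_filter (a2 := fun i => nth 0 R i == c)); last first.
  by move=> i; rewrite mem_iota0 => lt_iR; rewrite nth_rcons lt_iR.
have /eq_in_map eq_W : {in [seq i <- iota 0 (size R) | nth 0 R i == c],
                           nth 0 (rcons W a) =1 nth 0 W}.
  by move=> i; rewrite mem_filter mem_iota0 => /andP[_ lt_iR]; rewrite nth_rcons eq_size lt_iR.
case: (r == c); rewrite ?map_rcons eq_W ?cats0 // cats1.
by rewrite nth_rcons -eq_size ltnn eqxx.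
Qed.

Lemma all_pairs_iota0S n (f : nat -> nat -> bool) :
  all (fun i => all (f i) (iota 0 n.+1)) (iota 0 n.+1)
  = [&& all (fun i => all (f i) (iota 0 n)) (iota 0 n),
        all (fun i => f i n) (iota 0 n) & all (f n) (iota 0 n.+1)].
Proof.
rewrite [in X in all _ X]iota0S all_rcons andbC.
rewrite (eq_all (a2 := fun i => all (f i) (iota 0 n) && f i n)); last first.
  by move=> i; rewrite iota0S all_rcons andbC.
by rewrite all_predI andbA.
Qed.

Lemma regular_wrt_rcons P Q R W r a : size W = size R ->
  regular_wrt P Q (rcons R r) (rcons W a)
  = regular_wrt P Q R W && (Q r ==> differs_from_last P R W a).
Proof.
move=> eq_size; rewrite /regular_wrt size_rcons all_pairs_iota0S.
rewrite [X in [&& _, _ & X]](_ : _ = true) ?andbT; last first.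
  by apply/allP => j; rewrite mem_iota0 ltnS leqNgt => /negbTE ->.
congr andb.
  apply: eq_in_all => i; rewrite mem_iota0 => lt_iR.
  apply: eq_in_all => j; rewrite mem_iota0 => lt_jR.
  by rewrite !nth_rcons eq_size lt_iR lt_jR between0_rcons // ltnW.
have lastR : nth 0 (rcons R r) (size R) = r by rewrite nth_rcons ltnn eqxx.
have lastW : nth 0 (rcons W a) (size R) = a by rewrite nth_rcons eq_size ltnn eqxx.
rewrite lastR lastW; case: (Q r) => /=; last by apply/allP => i _; rewrite !andbF.
apply: eq_in_all => i; rewrite mem_iota0 => lt_iR.
rewrite !nth_rcons eq_size lt_iR between0_rcons //.
by rewrite /last_nonzero_at; case: (P _); case: (between0 _ _ _).
Qed.

Lemma admissible_rcons R W r a : size W = size R -> r < 3 ->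
  count_mem 2 R + (r == 2) <= count_mem 1 R ->
  admissible (rcons R r) (rcons W a) = admissible R W && admissible_step R W r a.
Proof.
move=> eq_size lt_r3 le_21.
rewrite /admissible /admissible_step !regular_wrt_rcons // !letters_at_rcons //.
rewrite count_mem_rcons.
have size1 := size_letters_at 1 R W.
case: r lt_r3 le_21 => [|[|[|//]]] _ /= le_21.
- by rewrite !cats0 addn0 andbT !andbA.
- rewrite addn0 in le_21.
  by rewrite cats0 addn0 takel_cat ?size1 // andbT !andbA andbAC.
rewrite addn1 in le_21.
rewrite cats0 cats1 addn1 (take_nth 0) ?size1 // eqseq_rcons.
by case: (a == _); rewrite ?andbT ?andbF.
Qed.

(** * Counting admissible words *)

Definition choices (k : nat) (R : seq nat) (r : nat) : nat :=
  if r == 0 then (if last_nonzero_in (predC1 0) R then k.-1 else k)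
  else if r == 1 then (if last_nonzero_in (pred1 2) R then k.-1 else k)
  else 1.

Lemma sum_admissible_step k R W r : size W = size R -> all (fun x => x < k) W ->
  r < 3 -> count_mem 2 R + (r == 2) <= count_mem 1 R ->
  \sum_(a < k) admissible_step R W r a = choices k R r.
Proof.
move=> eq_size ltW; rewrite /admissible_step /choices.
case: r => [|[|[|//]]] _ /= le_21; rewrite ?sum_differs_from_last //.
rewrite sum_ord_eq // (allP ltW) // (letters_at_subset 1 R W eq_size) // mem_nth //.
by rewrite size_letters_at -addn1.
Qed.

Lemma sum_tuple_rcons (T : finType) n (F : seq T -> nat) :
  \sum_(t : n.+1.-tuple T) F t = \sum_(t : n.-tuple T) \sum_(a : T) F (rcons t a).
Proof.
rewrite pair_big /=.
pose join (p : n.-tuple T * T) : n.+1.-tuple T := rcons_tuple p.1 p.2.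
pose split (t : n.+1.-tuple T) : n.-tuple T * T :=
  (belast_tuple (thead t) (behead_tuple t), last (thead t) (behead t)).
have joinK : cancel join split.
  move=> [s a]; rewrite /split /join; congr pair.
    by apply: val_inj => /=; case: s => -[|x s] size_s //=; rewrite belast_rcons.
  by case: s => -[|x s] size_s //=; rewrite last_rcons.
have splitK : cancel split join.
  by move=> t; apply: val_inj => /=; rewrite -lastI; case: t => -[|x s].
rewrite (reindex join); last by exists split => x _; [apply: joinK | apply: splitK].
by apply: eq_bigr => -[s a].
Qed.

Lemma sum_admissible_rcons k n R r : size R = n -> r < 3 ->
  count_mem 2 R + (r == 2) <= count_mem 1 R ->
  \sum_(t : n.+1.-tuple 'I_k) admissible (rcons R r) (map val t)
  = (\sum_(t : n.-tuple 'I_k) admissible R (map val t)) * choices k R r.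
Proof.
move=> size_R lt_r3 le_21.
rewrite (sum_tuple_rcons _ _ (fun s : seq 'I_k => admissible (rcons R r) (map val s) : nat)).
rewrite big_distrl /=; apply: eq_bigr => t _.
have size_t : size (map val t) = size R by rewrite size_map size_tuple.
under eq_bigr => a _ do rewrite map_rcons admissible_rcons //.
case: (admissible R _); last by rewrite mul0n big1.
rewrite mul1n -(sum_admissible_step _ _ _ _ size_t) //.
by apply/allP => _ /mapP[x _ ->]; apply: ltn_ord.
Qed.

Definition weight (k : nat) (R : seq nat) : nat :=
  k ^ (count_mem 1 R - p_of R + z_of R) * k.-1 ^ (p_of R + (count_mem 0 R - z_of R)).

Lemma weight_rcons k R r : r < 3 -> weight k (rcons R r) = weight k R * choices k R r.
Proof.
move=> lt_r3; have [p_le z_le] := p_of_z_of_le R.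
rewrite /weight /choices p_of_rcons z_of_rcons !count_mem_rcons -last_nonzero_in_nonzero.
(* The counts occur elaborated at two convertible types; generalising them shows lia one atom. *)
case: r lt_r3 => [|[|[|//]]] _ /=; [case: (last_nonzero_in _ R) .. | ] => /=;
  move: (count_mem 0 R) (count_mem 1 R) (p_of R) (z_of R) p_le z_le => c0 c1 p z p_le z_le.
- by rewrite -mulnA -expnSr; congr (_ ^ _ * _ ^ _); lia.
- by rewrite mulnAC -expnSr; congr (_ ^ _ * _ ^ _); lia.
- by rewrite -mulnA -expnSr; congr (_ ^ _ * _ ^ _); lia.
- by rewrite mulnAC -expnSr; congr (_ ^ _ * _ ^ _); lia.
by rewrite muln1; congr (_ ^ _ * _ ^ _); lia.
Qed.

Lemma sum_admissible k n R : size R = n -> all (fun x => x < 3) R -> in_M R ->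
  \sum_(t : n.-tuple 'I_k) admissible R (map val t) = weight k R.
Proof.
elim: n R => [|n IH] R.
  move=> /size0nil -> _ _; rewrite (eq_bigr (fun=> 1)) => [|t _]; last by rewrite tuple0.
  by rewrite sum_nat_const card_tuple /weight /p_of big_ord0 z_ofE.
case/lastP: R => [// | R r]; rewrite size_rcons => -[size_R].
rewrite all_rcons => /andP[lt_r3 letters_R] /in_M_rcons[M_R le_21].
by rewrite sum_admissible_rcons // IH // weight_rcons.
Qed.

(** * Twins as position sets *)

Lemma val_enum_setP n (P : pred nat) :
  map val (enum [set i : 'I_n | P i]) = filter P (iota 0 n).
Proof.
rewrite -val_enum_ord filter_map /enum_mem -enumT /=; congr map.
rewrite [X in _ = filter _ X](eq_filter (a2 := predT)) // filter_predT.
by apply: eq_filter => i /=; rewrite inE.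
Qed.

Lemma tnth_val k n (t : n.-tuple 'I_k) (i : 'I_n) : val (tnth t i) = nth 0 (map val t) i.
Proof. by rewrite (tnth_nth (tnth t i)) (nth_map (tnth t i)) // size_tuple. Qed.

Lemma nth_R_of n (S1 S2 : {set 'I_n}) (i : 'I_n) :
  nth 0 (R_of S1 S2) i = if i \in S1 then 1 else if i \in S2 then 2 else 0.
Proof. by rewrite /R_of (nth_map i) ?size_enum_ord // nth_ord_enum. Qed.

Lemma forall2_ord_iota n (B : 'I_n -> 'I_n -> bool) (b : nat -> nat -> bool) :
  (forall i j : 'I_n, B i j = b i j) ->
  [forall i, forall j, B i j] = all (fun i => all (b i) (iota 0 n)) (iota 0 n).
Proof.
move=> eq_Bb; apply/forallP/allP => [all_B i | all_b i].
  rewrite mem_iota0 => lt_in; apply/allP => j; rewrite mem_iota0 => lt_jn.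
  by have /forallP := all_B (Ordinal lt_in); move/(_ (Ordinal lt_jn)); rewrite eq_Bb.
apply/forallP => j; rewrite eq_Bb.
have /allP all_bi : all (b i) (iota 0 n) by apply: all_b; rewrite mem_iota0.
by apply: all_bi; rewrite mem_iota0.
Qed.

Lemma nth_filter_iota (f : pred nat) n t : t < count f (iota 0 n) ->
  [/\ nth 0 (filter f (iota 0 n)) t < n, f (nth 0 (filter f (iota 0 n)) t)
    & count f (iota 0 (nth 0 (filter f (iota 0 n)) t)) = t].
Proof.
rewrite -size_filter; elim: n t => [//|n IH] t; rewrite iota0S filter_rcons.
case: (boolP (f n)) => fn; last by move=> /IH[? ? ?]; split=> //; apply: ltnW.
rewrite size_rcons ltnS leq_eqVlt => /orP[/eqP-> | lt_t].
  by rewrite nth_rcons ltnn eqxx ltnSn fn size_filter.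
by have [? ? ?] := IH _ lt_t; rewrite nth_rcons lt_t; split=> //; apply: ltnW.
Qed.

Lemma leq_count_iota0 (f : pred nat) a b : a <= b -> count f (iota 0 a) <= count f (iota 0 b).
Proof. by move=> le_ab; rewrite -(subnKC le_ab) iotaD count_cat leq_addr. Qed.

Lemma count_mem_take c R l : l <= size R ->
  count_mem c (take l R) = count (fun i => nth 0 R i == c) (iota 0 l).
Proof. by move=> le_lR; rewrite -(map_nth_iota0 0) // count_map. Qed.

Lemma count_mem_nth c R : count_mem c R = count (fun i => nth 0 R i == c) (iota 0 (size R)).
Proof. by rewrite -count_mem_take // take_size. Qed.

Section Positions.
Variables (k n : nat) (R : seq nat).
Hypotheses (size_R : size R = n) (letters_R : all (fun x => x < 3) R).

Let pos (c : nat) : {set 'I_n} := [set i : 'I_n | nth 0 R i == c].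

Lemma positions_pos c : positions (pos c) = filter (fun i => nth 0 R i == c) (iota 0 n).
Proof. exact: val_enum_setP. Qed.

Lemma R_of_pos : R_of (pos 1) (pos 2) = R.
Proof.
apply: (@eq_from_nth _ 0); first by rewrite size_map size_enum_ord.
rewrite size_map size_enum_ord => i lt_in.
have /allP /(_ (nth 0 R i)) := letters_R; rewrite mem_nth ?size_R // => /(_ isT).
by rewrite (nth_R_of _ _ _ (Ordinal lt_in)) !inE /=; case: (nth 0 R i) => [|[|[|]]].
Qed.

Lemma R_of_inj (S1 S2 : {set 'I_n}) :
  [disjoint S1 & S2] -> R_of S1 S2 = R -> S1 = pos 1 /\ S2 = pos 2.
Proof.
move=> disj eq_R; split; apply/setP => i; rewrite !inE -eq_R nth_R_of.
  by case: (i \in S1); case: (i \in S2).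
by case: (boolP (i \in S1)) => [/(disjointFr disj) -> | _]; case: (i \in S2).
Qed.

Lemma subword_pos (t : n.-tuple 'I_k) c :
  map val (subword t (pos c)) = letters_at c R (map val t).
Proof.
rewrite /subword /letters_at -map_comp size_R -positions_pos /positions -map_comp.
by apply: eq_map => i /=; rewrite tnth_val.
Qed.

Lemma regular_pos (t : n.-tuple 'I_k) :
  regular t (pos 1) (pos 2)
  = regular_wrt (pred1 2) (pred1 1) R (map val t)
    && regular_wrt (predC1 0) (pred1 0) R (map val t).
Proof.
rewrite /regular R_of_pos /regular_wrt size_R; congr andb; apply: forall2_ord_iota => i j.
  by rewrite -val_eqE /= !tnth_val.
have /allP /(_ (nth 0 R i)) := letters_R; rewrite mem_nth ?size_R // => /(_ isT).
by rewrite -val_eqE /= !tnth_val; case: (nth 0 R i) => [|[|[|]]].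
Qed.

Lemma monotone_pos : count_mem 1 R = count_mem 2 R -> in_M R -> monotone (pos 1) (pos 2).
Proof.
move=> eq_12 M_R; apply/forallP => -[t lt_tn]; apply/implyP => /=.
rewrite !positions_pos cardE -(size_map val) -/(positions _) positions_pos size_filter => lt_t1.
have lt_t2 : t < count (fun i => nth 0 R i == 2) (iota 0 n).
  by rewrite -size_R -count_mem_nth -eq_12 count_mem_nth size_R.
have [lt_q1n R_q1 count_q1] := nth_filter_iota _ _ _ lt_t1.
have [lt_q2n R_q2 count_q2] := nth_filter_iota _ _ _ lt_t2.
set q1 := nth 0 _ t in lt_q1n R_q1 count_q1 *; set q2 := nth 0 _ t in lt_q2n R_q2 count_q2 *.
rewrite ltnNge; apply/negP => le_q2q1.
have lt_q2q1 : q2 < q1.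
  by rewrite ltn_neqAle le_q2q1 andbT; apply/eqP => eq_q; move: R_q1; rewrite -eq_q (eqP R_q2).
have := leq_count_iota0 (fun i => nth 0 R i == 1) _ _ (ltnW lt_q2q1).
rewrite count_q1; have := M_R q2.+1; rewrite !count_mem_take ?size_R //.
by rewrite iota0S -!cats1 !count_cat /= count_q2 (eqP R_q2) /=; lia.
Qed.

Lemma B_event_admissible (t : n.-tuple 'I_k) :
  count_mem 1 R = count_mem 2 R -> in_M R -> B_event R t = admissible R (map val t).
Proof.
move=> eq_12 M_R.
have disj : [disjoint pos 1 & pos 2].
  by rewrite disjoint_subset; apply/subsetP => i; rewrite !inE => /eqP ->.
have twins_pos : twins t (pos 1) (pos 2)
                 = (letters_at 2 R (map val t) == letters_at 1 R (map val t)).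
  by rewrite /twins disj -(inj_eq (inj_map val_inj)) !subword_pos eq_sym.
have -> : admissible R (map val t) = twins t (pos 1) (pos 2) && regular t (pos 1) (pos 2).
  by rewrite /admissible take_oversize ?size_letters_at ?eq_12 // twins_pos regular_pos.
apply/existsP/andP => [[S1 /existsP[S2 /and4P[tw _ reg /eqP eq_R]]] | [tw reg]].
  by case: (R_of_inj _ _ (andP tw).1 eq_R) => eq1 eq2; rewrite -eq1 -eq2 tw reg.
exists (pos 1); apply/existsP; exists (pos 2).
by rewrite tw reg monotone_pos // R_of_pos eqxx.
Qed.

End Positions.

Local Open Scope ring_scope.

Lemma ratio_powers (F : numFieldType) (k A B m : nat) : (0 < k)%N ->
  (k ^ A * k.-1 ^ B)%:R / (k ^ (A + B + m))%:R
  = (1 / k%:R) ^+ m * (1 - 1 / k%:R) ^+ B :> F.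
Proof.
move=> k_gt0; have k_neq0 : k%:R != 0 :> F by rewrite pnatr_eq0 -lt0n.
have -> : 1 - 1 / k%:R = k.-1%:R / k%:R :> F.
  by rewrite -subn1 natrB //; field.
by rewrite natrM !natrX !exprD !expr_div_n !expr1n; field; rewrite !expf_neq0.
Qed.

Theorem lemma19 (k n m p z : nat) (R : seq nat) :
  (2 <= k)%N ->
  in_Rnm n m R -> p_of R = p -> z_of R = z -> in_M R ->
  prob_B k n R
  = (1 / k%:R) ^+ m * (1 - 1 / k%:R) ^+ (p + n - 2 * m - z)%N.
Proof.
move=> le2k /and4P[/eqP size_R letters_R /eqP ones /eqP twos] p_R z_R M_R.
have card_B : #|[set w : n.-tuple 'I_k | B_event R w]| = weight k R.
  rewrite -(sum_admissible k n R size_R letters_R M_R) -sum1_card [LHS]big_mkcond.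
  by apply: eq_bigr => w _; rewrite inE B_event_admissible ?ones ?twos.
have count_R := count_mem012 R letters_R; have [p_le z_le] := p_of_z_of_le R.
rewrite ones twos size_R p_R z_R in count_R p_le z_le.
rewrite /prob_B card_B /weight ones p_R z_R.
have -> : (p + n - 2 * m - z = p + (count_mem 0 R - z))%N by lia.
have -> : n = (m - p + z + (p + (count_mem 0 R - z)) + m)%N by lia.
by apply: ratio_powers; lia.
Qed.
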